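(* Let $A\subseteq\mathbb N_0\times\mathbb S$ be a Schnorr test for a non-degenerate computable forecasting system $\varphi$ such that $A_n$ is a partial cut for every $n\in\mathbb N_0$. Then there is a recursive map $\tilde e:\mathbb N_0\times\mathbb S\to\mathbb N_0$ such that $\tilde e(\cdot,s)$ is a growth function for every $s\in\mathbb S$ and $$\overline P_\varphi\big([A_n^{\ge\ell}]\mid s\big)\le2^{-N}\quad\text{for all }(N,n,s)\in\mathbb N_0^2\times\mathbb S\text{ and all }\ell\ge\tilde e(N,s).$$
   Context: $\mathbb N_0=\{0,1,\dots\}$; $\Omega=\{0,1\}^{\mathbb N}$; $\mathbb S$ finite binary strings, $\square$ empty string, $|s|$ length, $\omega^n$ first $n$ entries; $[s]=\{\omega:\omega^{|s|}=s\}$, $[A]=\bigcup_{s\in A}[s]$; a partial cut is a prefix-free subset of $\mathbb S$. For $A\subseteq\mathbb N_0\times\mathbb S$: $A_n=\{s:(n,s)\in A\}$, $A_n^{<\ell}=\{s\in A_n:|s|<\ell\}$, $A_n^{\ge\ell}=\{s\in A_n:|s|\ge\ell\}$. $\mathcal I$: nonempty closed subintervals of $[0,1]$; $\overline E_I(f)=\max_{p\in I}[pf(1)+(1-p)f(0)]$. Forecasting system $\varphi:\mathbb S\to\mathcal I$, $\underline\varphi=\min\varphi$, $\overline\varphi=\max\varphi$; non-degenerate if $\underline\varphi(s)<1$ and $\overline\varphi(s)>0$ for all $s$; computable if $\underline\varphi,\overline\varphi$ are computable real maps. Supermartingale: $M:\mathbb S\to\mathbb R$ with $\overline E_{\varphi(s)}(M(s\,\cdot))\le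 M(s)$. For $G\subseteq\Omega$, $\overline P_\varphi(G\mid s)=\inf\{M(s):M\text{ supermartingale for }\varphi,\ \liminf_nM(\omega^n)\ge\mathbb 1_G(\omega)\ \forall\omega\in[s]\}$ and $\overline P_\varphi(G)=\overline P_\varphi(G\mid\square)$. A Schnorr test for $\varphi$ is a recursive $A\subseteq\mathbb N_0\times\mathbb S$ with $\overline P_\varphi([A_n])\le2^{-n}$ for all $n$, and a recursive $e:\mathbb N_0^2\to\mathbb N_0$ with $\overline P_\varphi([A_n]\setminus[A_n^{<\ell}])\le2^{-N}$ for all $(N,n)$ and $\ell\ge e(N,n)$. A growth function is a recursive, non-decreasing, unbounded map $\mathbb N_0\to\mathbb N_0$. *)

From HB Require Import structures.
From mathcomp Require Import all_boot all_order all_algebra.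
From mathcomp Require Import all_classical all_reals.
From mathcomp Require Import ereal topology normedtype sequences.
Set Implicit Arguments. Unset Strict Implicit. Unset Printing Implicit Defensive.
Import Order.TTheory GRing.Theory Num.Theory.
Local Open Scope classical_set_scope.
Local Open Scope ring_scope.

Inductive prog : Type :=
| PZero
| PSucc
| PProj of nat
| PComp of prog & seq prog
| PPrec of prog & prog
| PMu of prog.

Inductive eval : prog -> seq nat -> nat -> Prop :=
| ev_zero v : eval PZero v 0
| ev_succ v : eval PSucc v (head 0%N v).+1
| ev_proj i v : eval (PProj i) v (nth 0%N v i)
| ev_comp f gs v ws y : evals gs v ws -> eval f ws y -> eval (PComp f gs) v y
| ev_prec0 f g v y : eval f v y -> eval (PPrec f g) (0%N :: v) y
| ev_precS f g n v z y : eval (PPrec f g) (n :: v) z ->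
    eval g [:: n, z & v] y -> eval (PPrec f g) (n.+1 :: v) y
| ev_mu f v y : eval f (y :: v) 0 ->
    (forall z, (z < y)%N -> exists w, eval f (z :: v) w.+1) ->
    eval (PMu f) v y
with evals : seq prog -> seq nat -> seq nat -> Prop :=
| evs_nil v : evals [::] v [::]
| evs_cons g gs v w ws : eval g v w -> evals gs v ws -> evals (g :: gs) v (w :: ws).

Definition rec1 (f : nat -> nat) : Prop :=
  exists p, forall n, eval p [:: n] (f n).
Definition rec2 (f : nat -> nat -> nat) : Prop :=
  exists p, forall m n, eval p [:: m; n] (f m n).

(* Binary strings S = seq bool, coded injectively as naturals:
   s is coded by the number with binary expansion 1 s. *)
Definition code (s : seq bool) : nat := foldl (fun acc (b : bool) => acc.*2 + b)%N 1%N s.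

Definition rec_setNS (A : nat -> seq bool -> Prop) : Prop :=
  exists chi, rec2 chi /\ forall n s, A n s <-> chi n (code s) = 1%N.
Definition rec_NN (e : nat -> nat -> nat) : Prop := rec2 e.
Definition rec_NS (e : nat -> seq bool -> nat) : Prop :=
  exists g, rec2 g /\ forall N s, e N s = g N (code s).

Definition growth (f : nat -> nat) : Prop :=
  rec1 f /\ (forall m n, (m <= n)%N -> (f m <= f n)%N) /\
  (forall m, exists n, (m <= f n)%N).

Definition computable_real_map {R : realType} (f : seq bool -> R) : Prop :=
  exists a b c : nat -> nat -> nat, [/\ rec2 a, rec2 b, rec2 c &
    forall s n, `| f s - ((a (code s) n)%:R - (b (code s) n)%:R) / (c (code s) n).+1%:R |
                <= (2 : R) ^- n].

(* A forecasting system phi : S -> I is given by its lower and upper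
   endpoints lo = underline phi, hi = overline phi. *)
Definition forecasting_system {R : realType} (lo hi : seq bool -> R) : Prop :=
  forall s, 0 <= lo s /\ lo s <= hi s /\ hi s <= 1.

Definition non_degenerate {R : realType} (lo hi : seq bool -> R) : Prop :=
  forall s, lo s < 1 /\ 0 < hi s.

Definition computable_fs {R : realType} (lo hi : seq bool -> R) : Prop :=
  computable_real_map lo /\ computable_real_map hi.

Definition upE {R : realType} (l h : R) (f : bool -> R) : R :=
  sup [set p * f true + (1 - p) * f false | p in [set p | l <= p <= h]].

Definition supermartingale {R : realType} (lo hi : seq bool -> R)
  (M : seq bool -> R) : Prop :=
  forall s, upE (lo s) (hi s) (fun x => M (rcons s x)) <= M s.

(* Omega = nat -> bool ; omega^n = mkseq omega n ; cylinders *)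
Definition cyl (s : seq bool) : set (nat -> bool) :=
  [set w | mkseq w (size s) = s].
Definition cylA (B : seq bool -> Prop) : set (nat -> bool) :=
  [set w | exists2 s, B s & cyl s w].

Definition indicE {R : realType} (G : set (nat -> bool)) (w : nat -> bool) : \bar R :=
  ((if `[< G w >] then 1 else 0 : R)%:E)%E.

Definition upP {R : realType} (lo hi : seq bool -> R) (G : set (nat -> bool))
  (s : seq bool) : \bar R :=
  ereal_inf [set (M s)%:E | M in [set M | supermartingale lo hi M /\
     forall w, cyl s w ->
       (indicE G w <= limn_einf (fun n => (M (mkseq w n))%:E))%E]].

Definition partial_cut (B : seq bool -> Prop) : Prop :=
  forall s t, B s -> B t -> prefix s t -> s = t.

Definition Asec (A : nat -> seq bool -> Prop) n : seq bool -> Prop := A n.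
Definition Alt (A : nat -> seq bool -> Prop) n l : seq bool -> Prop :=
  fun s => A n s /\ (size s < l)%N.
Definition Age (A : nat -> seq bool -> Prop) n l : seq bool -> Prop :=
  fun s => A n s /\ (l <= size s)%N.

Definition schnorr_test {R : realType} (lo hi : seq bool -> R)
  (A : nat -> seq bool -> Prop) : Prop :=
  [/\ rec_setNS A,
      (forall n, (upP lo hi (cylA (Asec A n)) [::] <= ((2 : R) ^- n)%:E)%E) &
      exists e, rec_NN e /\
        forall N n l, (e N n <= l)%N ->
          (upP lo hi (cylA (Asec A n) `\` cylA (Alt A n l)) [::]
             <= ((2 : R) ^- N)%:E)%E].

(* A non-negative supermartingale can grow in one step from [u] at most by the
   factor [1 / min (hi u, 1 - lo u)].  Choosing computably, for every node [u], an
   exponent [m u] with [2^-(m u)] below both bounds, we get [M s <= 2^(K s) M []]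
   where [K s] sums [m] over the proper prefixes of [s]; hence conditioning on [s]
   costs at most a factor [2^(K s)] in upper probability.  Put
   [et N s = N + majorant e (N + K s + 1)], with [majorant e j] dominating [e] on
   [[0, j]^2].  If [n <= N + K s + 1], then since [A n] is a partial cut,
   [[A_n^{>= l}] <= [A_n] \ [A_n^{< l}]], of upper probability at most
   [2^-(N + K s + 1)] by the tail bound [e] of the Schnorr test; otherwise
   [[A_n]] itself has upper probability at most [2^-n <= 2^-(N + K s + 1)]. *)

From Pilot Require Import Defs.
From HB Require Import structures.
From mathcomp Require Import all_boot all_order all_algebra.
From mathcomp Require Import all_classical all_reals.
From mathcomp Require Import ereal topology normedtype sequences.
From mathcomp Require Import zify ring lra.
Import Order.TTheory GRing.Theory Num.Theory.
Local Open Scope classical_set_scope.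

Set Implicit Arguments. Unset Strict Implicit. Unset Printing Implicit Defensive.
Local Notation code := Defs.code.

(** * Computable functions *)

(* Functions are total on argument vectors of every length, missing arguments
   reading as [0]; this spares us any bookkeeping of arities. *)
Definition computes (p : prog) (F : seq nat -> nat) := forall v, Defs.eval p v (F v).
Definition computable (F : seq nat -> nat) := exists p, computes p F.

Lemma computable_ext F G : computable F -> (forall v, F v = G v) -> computable G.
Proof. by move=> [p hp] FG; exists p => v; rewrite -FG. Qed.

Lemma computable_zero : computable (fun=> 0).
Proof. by exists PZero => v; constructor. Qed.

Lemma computable_nth i : computable (fun v => nth 0 v i).
Proof. by exists (PProj i) => v; constructor. Qed.

Fixpoint all_computable (Gs : seq (seq nat -> nat)) : Prop :=
  if Gs is G :: Gs' then computable G /\ all_computable Gs' else True.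

Lemma computable_comp F Gs : computable F -> all_computable Gs ->
  computable (fun v => F (map (fun G => G v) Gs)).
Proof.
move=> [f hf] hGs.
have [gs hgs] : exists gs, forall v, evals gs v (map (fun G => G v) Gs).
  elim: Gs hGs => [_|G Gs IH [[g hg] /IH [gs hgs]]].
    by exists [::] => v; constructor.
  by exists (g :: gs) => v; constructor.
by exists (PComp f gs) => v; apply: ev_comp (hgs v) (hf _).
Qed.

Lemma computable_op1 (f : nat -> nat) G :
  computable (fun v => f (nth 0 v 0)) -> computable G -> computable (fun v => f (G v)).
Proof. by move=> hf hG; apply: (computable_comp (Gs := [:: G]) hf). Qed.

Lemma computable_op2 (f : nat -> nat -> nat) G1 G2 :
  computable (fun v => f (nth 0 v 0) (nth 0 v 1)) -> computable G1 -> computable G2 ->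
  computable (fun v => f (G1 v) (G2 v)).
Proof. by move=> hf h1 h2; apply: (computable_comp (Gs := [:: G1; G2]) hf). Qed.

Lemma computable_succ G : computable G -> computable (fun v => (G v).+1).
Proof.
apply: computable_op1; exists PSucc => v.
by case: v => [|x v]; constructor.
Qed.

Lemma computable_const k : computable (fun=> k).
Proof. by elim: k => [|k /computable_succ //]; exact: computable_zero. Qed.

Lemma rec2_computable f : rec2 f <-> computable (fun v => f (nth 0 v 0) (nth 0 v 1)).
Proof.
split=> [[p hp]|[p hp]]; last by exists p => m n; exact: hp [:: m; n].
exists (PComp p [:: PProj 0; PProj 1]) => v.
by apply: ev_comp (hp _ _); do !constructor.
Qed.

Fixpoint prim_rec (f : nat -> nat) (g : nat -> nat -> nat -> nat) n x :=
  if n is k.+1 then g k (prim_rec f g k x) x else f x.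

Lemma computable_prim_rec f g :
  computable (fun v => f (nth 0 v 0)) ->
  computable (fun v => g (nth 0 v 0) (nth 0 v 1) (nth 0 v 2)) ->
  computable (fun v => prim_rec f g (nth 0 v 0) (nth 0 v 1)).
Proof.
move=> [pf hf] [pg hg].
have hrec n x : Defs.eval (PPrec pf pg) [:: n; x] (prim_rec f g n x).
  elim: n => [|n IH]; first exact/ev_prec0/hf.
  exact: ev_precS IH (hg _).
exists (PComp (PPrec pf pg) [:: PProj 0; PProj 1]) => v.
by apply: ev_comp (hrec _ _); do !constructor.
Qed.

Lemma computable_addn G1 G2 : computable G1 -> computable G2 ->
  computable (fun v => G1 v + G2 v).
Proof.
move=> h1 h2; apply: computable_op2 h1 h2.
apply: computable_ext (computable_prim_rec (f := id) (g := fun _ z _ => z.+1) _ _) _.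
- exact: computable_nth.
- exact/computable_succ/computable_nth.
- by move=> v /=; elim: (nth 0 v 0) => //= n ->.
Qed.

Lemma computable_muln G1 G2 : computable G1 -> computable G2 ->
  computable (fun v => G1 v * G2 v).
Proof.
move=> h1 h2; apply: computable_op2 h1 h2.
apply: computable_ext (computable_prim_rec (f := fun=> 0) (g := fun _ z x => z + x) _ _) _.
- exact: computable_zero.
- by apply: computable_addn; exact: computable_nth.
- by move=> v /=; elim: (nth 0 v 0) => //= n ->; rewrite mulSn addnC.
Qed.

Lemma computable_predn G : computable G -> computable (fun v => (G v).-1).
Proof.
move=> h; apply: computable_op1 h.
apply: computable_ext (computable_prim_rec (f := fun=> 0) (g := fun k _ _ => k) _ _) _.
- exact: computable_zero.
- exact: computable_nth.
- by move=> v /=; case: (nth 0 v 0).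
Qed.

Lemma computable_subn G1 G2 : computable G1 -> computable G2 ->
  computable (fun v => G1 v - G2 v).
Proof.
move=> h1 h2.
have hsub : computable (fun v => prim_rec id (fun _ z _ => z.-1) (nth 0 v 0) (nth 0 v 1)).
  apply: computable_prim_rec; first exact: computable_nth.
  exact/computable_predn/computable_nth.
apply: computable_ext (computable_op2 hsub h2 h1) _ => v /=.
by elim: (G2 v) => [|n /= ->]; rewrite ?subn0 ?subnS.
Qed.

Lemma computable_exp2 G : computable G -> computable (fun v => 2 ^ G v).
Proof.
move=> h; apply: computable_op1 h.
apply: computable_ext (computable_prim_rec (f := fun=> 1) (g := fun _ z _ => z + z) _ _) _.
- exact: computable_const.
- by apply: computable_addn; exact: computable_nth.
- by move=> v /=; elim: (nth 0 v 0) => //= n ->; rewrite expnS mul2n addnn.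
Qed.

Lemma computable_odd G : computable G -> computable (fun v => odd (G v) : nat).
Proof.
move=> h; apply: (computable_op1 (f := fun n => odd n : nat)) h.
apply: computable_ext (computable_prim_rec (f := fun=> 0) (g := fun _ z _ => 1 - z) _ _) _.
- exact: computable_zero.
- by apply: computable_subn; [exact: computable_const | exact: computable_nth].
- by move=> v /=; elim: (nth 0 v 0) => //= n ->; case: (odd n).
Qed.

Lemma computable_half G : computable G -> computable (fun v => (G v)./2).
Proof.
move=> h; apply: computable_op1 h.
apply: computable_ext (computable_prim_rec (f := fun=> 0) (g := fun k z _ => z + odd k) _ _) _.
- exact: computable_zero.
- by apply: computable_addn; [exact: computable_nth | exact/computable_odd/computable_nth].
- by move=> v /=; elim: (nth 0 v 0) => //= n ->; rewrite uphalf_half addnC.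
Qed.

Lemma computable_iter_half G1 G2 : computable G1 -> computable G2 ->
  computable (fun v => iter (G1 v) half (G2 v)).
Proof.
move=> h1 h2; apply: (computable_op2 (f := fun n => iter n half)) h1 h2.
apply: computable_ext (computable_prim_rec (f := id) (g := fun _ z _ => z./2) _ _) _.
- exact: computable_nth.
- exact/computable_half/computable_nth.
- by move=> v /=; elim: (nth 0 v 0) => //= n ->.
Qed.

Lemma computable_sum (f : nat -> nat -> nat) G1 G2 :
  computable (fun v => f (nth 0 v 0) (nth 0 v 1)) -> computable G1 -> computable G2 ->
  computable (fun v => \sum_(i < G1 v) f i (G2 v)).
Proof.
move=> hf h1 h2; apply: (computable_op2 (f := fun n x => \sum_(i < n) f i x)) h1 h2.
apply: computable_ext
  (computable_prim_rec (f := fun=> 0) (g := fun k z x => z + f k x) _ _) _.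
- exact: computable_zero.
- apply: computable_addn; first exact: computable_nth.
  by apply: computable_op2 hf _ _; exact: computable_nth.
- by move=> v /=; elim: (nth 0 v 0) => [|n /= ->]; rewrite ?big_ord0 ?big_ord_recr.
Qed.

Lemma computable_leq G1 G2 : computable G1 -> computable G2 ->
  computable (fun v => (G1 v <= G2 v) : nat).
Proof.
move=> h1 h2; apply: computable_ext (computable_subn (computable_const 1) (computable_subn h1 h2)) _.
by move=> v; rewrite -subn_eq0; case: (G1 v - G2 v).
Qed.

Lemma computable_negb (B : seq nat -> bool) :
  computable (fun v => B v : nat) -> computable (fun v => ~~ B v : nat).
Proof.
move=> h; apply: computable_ext (computable_subn (computable_const 1) h) _.
by move=> v; case: (B v).
Qed.

Lemma computable_andb (B1 B2 : seq nat -> bool) :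
  computable (fun v => B1 v : nat) -> computable (fun v => B2 v : nat) ->
  computable (fun v => B1 v && B2 v : nat).
Proof.
move=> h1 h2; apply: computable_ext (computable_muln h1 h2) _.
by move=> v; case: (B1 v); case: (B2 v).
Qed.

Lemma computable_orb (B1 B2 : seq nat -> bool) :
  computable (fun v => B1 v : nat) -> computable (fun v => B2 v : nat) ->
  computable (fun v => B1 v || B2 v : nat).
Proof.
move=> h1 h2.
apply: computable_ext (computable_leq (computable_const 1) (computable_addn h1 h2)) _.
by move=> v; case: (B1 v); case: (B2 v).
Qed.

(* [0] when there is no witness *)
Definition minsearch (P : seq nat -> bool) (v : seq nat) : nat :=
  if pselect (exists y, P (y :: v)) is left ex then ex_minn ex else 0.

Lemma minsearchP (P : seq nat -> bool) v : (exists y, P (y :: v)) -> P (minsearch P v :: v).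
Proof.
rewrite /minsearch => ex; case: pselect => [ex'|//].
by case: ex_minnP.
Qed.

Lemma minsearch_min (P : seq nat -> bool) v y : P (y :: v) -> minsearch P v <= y.
Proof.
move=> Py; rewrite /minsearch; case: pselect => [ex|[]]; last by exists y.
by case: ex_minnP => m _; apply.
Qed.

Lemma computable_minsearch (P : seq nat -> bool) :
  computable (fun v => P v : nat) -> (forall v, exists y, P (y :: v)) ->
  computable (minsearch P).
Proof.
move=> /computable_negb [p hp] ex; exists (PMu p) => v.
rewrite /minsearch; case: pselect => [ex'|[]//]; case: ex_minnP => y Py ymin.
apply: ev_mu => [|z zy]; first by move: (hp (y :: v)); rewrite Py.
exists 0; move: (hp (z :: v)); case: (boolP (P (z :: v))) => //= Pz.
by move: (ymin _ Pz); rewrite leqNgt zy.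
Qed.


(** * Binary codes and prefix sums *)

Lemma code_rcons s (x : bool) : code (rcons s x) = (code s).*2 + x.
Proof. by rewrite /code foldl_rcons. Qed.

Lemma code_gt0 s : 0 < code s.
Proof. by elim/last_ind: s => // s x; rewrite code_rcons -double_gt0; lia. Qed.

Lemma code_surj t : 0 < t -> exists s, code s = t.
Proof.
elim/ltn_ind: t => t IH t_gt0; have [t_lt2|t_ge2] := ltnP t 2.
  by exists [::]; rewrite /code /=; lia.
have [s cs] : exists s, code s = t./2.
  by apply: IH; [rewrite ltn_half_double | rewrite geq_half_double]; lia.
by exists (rcons s (odd t)); rewrite code_rcons cs addnC odd_double_half.
Qed.

(* for [t = code s], [iter i.+1 half t] runs through the codes of the proper
   prefixes of [s], longest first, and is [0] from [i = size s] on *)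
Definition prefix_sum (f : nat -> nat) t := \sum_(i < t) f (iter i.+1 half t).

Lemma iter_half_eq0 k t : t <= k -> iter k half t = 0.
Proof.
elim: k t => [|k IH] t; first by rewrite leqn0 => /eqP ->.
by move=> tk; rewrite iterSr IH //; move: (odd_double_half t); rewrite -addnn; lia.
Qed.

Lemma prefix_sum_widen f t L : f 0 = 0 -> t <= L ->
  \sum_(i < L) f (iter i.+1 half t) = prefix_sum f t.
Proof.
move=> f0 tL; rewrite /prefix_sum -(big_mkord xpredT (fun i => f (iter i.+1 half t))).
rewrite (big_cat_nat (leq0n t) tL) /= big_mkord [X in _ + X]big1_seq ?addn0 // => i.
by rewrite mem_index_iota => /andP[_ /andP[ti _]]; rewrite iter_half_eq0 // ltnW.
Qed.

Lemma prefix_sum_double f t (x : bool) : f 0 = 0 ->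
  prefix_sum f (t.*2 + x) = prefix_sum f t + f t.
Proof.
move=> f0; have half_tx : (t.*2 + x)./2 = t by rewrite addnC half_bit_double.
rewrite /prefix_sum; under eq_bigr do rewrite iterSr half_tx.
have [->|t_gt0] := posnP t.
  by rewrite big1 ?big_ord0 // => i _; rewrite iter_half_eq0.
have -> : t.*2 + x = (t.*2 + x).-1.+1 by lia.
by rewrite big_ord_recl /= addnC prefix_sum_widen //; lia.
Qed.

Lemma computable_prefix_sum f : computable (fun v => f (nth 0 v 0)) ->
  computable (fun v => prefix_sum f (nth 0 v 0)).
Proof.
move=> hf; apply: (computable_sum (f := fun i t => f (iter i.+1 half t))); last 2 first.
- exact: computable_nth.
- exact: computable_nth.
apply: computable_op1 hf _.
by apply: computable_iter_half; [apply: computable_succ|]; exact: computable_nth.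
Qed.

Definition majorant (e : nat -> nat -> nat) j := \sum_(i < j.+1) \sum_(k < j.+1) e i k.

Lemma majorant_homo e : {homo majorant e : j j' / j <= j'}.
Proof.
move=> j j' jj'; have jj'S : j.+1 <= j'.+1 by [].
rewrite /majorant (big_ord_widen _ (fun i => \sum_(k < j.+1) e i k) jj'S) big_mkcond /=.
apply: leq_sum => i _; case: ifP => // _.
rewrite (big_ord_widen _ (e i) jj'S) big_mkcond /=.
by apply: leq_sum => k _; case: ifP.
Qed.

Lemma leq_majorant e j x y : x <= j -> y <= j -> e x y <= majorant e j.
Proof.
move=> xj yj; rewrite /majorant (bigD1 (Ordinal (xj : x < j.+1))) //=.
by rewrite (bigD1 (Ordinal (yj : y < j.+1))) //= -addnA leq_addr.
Qed.

Lemma computable_majorant e G : rec2 e -> computable G ->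
  computable (fun v => majorant e (G v)).
Proof.
move=> /rec2_computable he hG.
have inner : computable (fun v => \sum_(k < nth 0 v 0) e (nth 0 v 1) k).
  apply: (computable_sum (f := fun k i => e i k) (G1 := nth 0^~ 0) (G2 := nth 0^~ 1));
    try exact: computable_nth.
  by apply: computable_op2 he _ _; exact: computable_nth.
apply: (computable_sum (f := fun i j => \sum_(k < j) e i k) (G1 := fun v => (G v).+1)
                       (G2 := fun v => (G v).+1)); try exact: computable_succ hG.
by apply: (computable_op2 (f := fun n i => \sum_(k < n) e i k)) inner _ _;
  exact: computable_nth.
Qed.

Definition dyadic_lb (a b c : nat -> nat -> nat) t y : bool :=
  (c t y).+1 * 2 <= (a t y - b t y) * 2 ^ y.

Lemma computable_dyadic_lb a b c : rec2 a -> rec2 b -> rec2 c ->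
  computable (fun v => dyadic_lb a b c (nth 0 v 1) (nth 0 v 0) : nat).
Proof.
move=> /rec2_computable ra /rec2_computable rb /rec2_computable rc.
have swap f : computable (fun v => f (nth 0 v 0) (nth 0 v 1)) ->
    computable (fun v => f (nth 0 v 1) (nth 0 v 0)).
  by move=> hf; apply: computable_op2 hf _ _; exact: computable_nth.
apply: computable_leq; apply: computable_muln.
- exact/computable_succ/swap.
- exact: computable_const.
- by apply: computable_subn; exact: swap.
- exact/computable_exp2/computable_nth.
Qed.

(** * Dyadic bounds from rational approximations *)

Local Open Scope ring_scope.

Section DyadicBounds.
Variable R : realType.

Definition rat_approx (a b c : nat -> nat -> nat) t n : R :=
  ((a t n)%:R - (b t n)%:R) / (c t n).+1%:R.

Definition approximates (f : seq bool -> R) (a b c : nat -> nat -> nat) :=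
  forall s n, `|f s - rat_approx a b c (code s) n| <= 2 ^- n.

Lemma approximates_compl f a b c : approximates f a b c ->
  approximates (fun s => 1 - f s) (fun t n => (c t n).+1 + b t n)%N a c.
Proof.
move=> apx s n; apply: le_trans (apx s n); rewrite -normrN le_eqVlt; apply/orP; left.
by apply/eqP; congr `|_|; rewrite /rat_approx natrD; field.
Qed.


Lemma dyadic_lbE a b c t y : dyadic_lb a b c t y = (2 * 2 ^- y <= rat_approx a b c t y).
Proof.
rewrite /dyadic_lb /rat_approx; set A := a t y; set B := b t y; set C := (c t y).+1.
have C_gt0 : 0 < C%:R :> R by rewrite ltr0n.
have e_gt0 : 0 < (2 : R) ^+ y by rewrite exprn_gt0.
have [BA|AB] := leqP B A; last first.
  rewrite (_ : A - B = 0)%N ?mul0n; last by lia.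
  have : A%:R - B%:R < 0 :> R by rewrite subr_lt0 ltr_nat.
  move=> neg; apply/esym/negbTE; rewrite -ltNge.
  apply: (@lt_trans _ _ 0); first by rewrite pmulr_llt0 // invr_gt0.
  by rewrite divr_gt0.
rewrite -(@ler_nat R) !natrM natrX natrB // ler_pdivlMr //.
rewrite -[X in _ = X](ler_pM2r e_gt0); congr (_ <= _).
by field; rewrite gt_eqF.
Qed.

Lemma dyadic_lb_sound f a b c s y : approximates f a b c ->
  dyadic_lb a b c (code s) y -> 2 ^- y <= f s.
Proof. by move=> apx; rewrite dyadic_lbE; have := apx s y; rewrite ler_distl; lra. Qed.

Lemma dyadic_lb_complete f a b c s y : approximates f a b c ->
  3 * 2 ^- y <= f s -> dyadic_lb a b c (code s) y.
Proof. by move=> apx; rewrite dyadic_lbE; have := apx s y; rewrite ler_distl; lra. Qed.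

Lemma exists_dyadic_le (g : R) : 0 < g -> exists y : nat, 3 * 2 ^- y <= g.
Proof.
move=> g_gt0; have := archi_boundP (divr_ge0 (ler0n R 3) (ltW g_gt0)).
set y := Num.Def.archi_bound _ => lt_y; exists y.
have e_gt0 : 0 < (2 : R) ^+ y by rewrite exprn_gt0.
have y_le : (y%:R : R) <= 2 ^+ y by rewrite -natrX ler_nat ltnW // ltn_expl.
rewrite ler_pdivrMr // mulrC -ler_pdivrMr //.
exact: ltW (lt_le_trans lt_y y_le).
Qed.

End DyadicBounds.


Lemma prefix_iter_rcons (g : seq bool -> bool) t k m : (k <= m)%N ->
  prefix (iter k (fun u => rcons u (g u)) t) (iter m (fun u => rcons u (g u)) t).
Proof.
move=> km; rewrite -(subnKC km); elim: (m - k)%N => [|d IH]; first by rewrite addn0 prefix_refl.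
by rewrite addnS; apply: prefix_trans IH (prefix_rcons _ _).
Qed.

Lemma mkseq_iter_rcons (g : seq bool -> bool) t k :
  let ext u := rcons u (g u) in
  mkseq (fun i => nth false (iter i.+1 ext t) i) (size t + k) = iter k ext t.
Proof.
move=> ext; have size_iter j : size (iter j ext t) = (size t + j)%N.
  by elim: j => [|j IH]; rewrite ?addn0 //= size_rcons IH addnS.
have nth_iter j j' i : (j <= j')%N -> (i < size t + j)%N ->
    nth false (iter j' ext t) i = nth false (iter j ext t) i.
  move=> jj' ij; have := prefix_iter_rcons g t jj'; rewrite prefixE => /eqP <-.
  by rewrite nth_take // size_iter.
apply: (@eq_from_nth _ false); first by rewrite size_mkseq size_iter.
move=> i; rewrite size_mkseq => ik; rewrite nth_mkseq //.
rewrite -(nth_iter _ (maxn i.+1 k)) ?leq_maxl //; last by lia.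
by rewrite (nth_iter k) ?leq_maxr.
Qed.

Lemma limn_einf_le (R : realType) (u : (\bar R)^nat) K c :
  (forall n, (K <= n)%N -> (u n <= c)%E) -> (limn_einf u <= c)%E.
Proof.
move=> h; rewrite limn_einf_lim (cvg_lim _ (@cvg_einfs_sup _ u)) //.
apply: ge_ereal_sup => _ [n _ <-] /=.
apply: le_trans (ereal_inf_lbound _) (h (maxn n K) _); last by rewrite leq_maxr.
by exists (maxn n K) => //; rewrite /= leq_maxl.
Qed.

(** * Supermartingales *)

Lemma upE_ge (R : realType) (l h p : R) f : 0 <= l -> l <= p -> p <= h -> h <= 1 ->
  p * f true + (1 - p) * f false <= upE l h f.
Proof.
move=> l_ge0 lp ph h_le1; apply: sup_upper_bound; last by exists p => //; apply/andP.
split; first by exists (p * f true + (1 - p) * f false), p => //; apply/andP.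
exists (`|f true| + `|f false|) => _ [q /andP[lq qh] <-].
have q_ge0 : 0 <= q by lra.
have q_le1 : 0 <= 1 - q by lra.
have := ler_wpM2l q_ge0 (ler_norm (f true)).
have := ler_wpM2l q_le1 (ler_norm (f false)).
have := ler_wpM2l q_ge0 (normr_ge0 (f false)).
have := ler_wpM2l q_le1 (normr_ge0 (f true)).
rewrite !mulr0; nra.
Qed.

Section Supermartingales.
Variables (R : realType) (lo hi : seq bool -> R).
Hypothesis fs : forecasting_system lo hi.

Definition descend (M : seq bool -> R) u := rcons u (M (rcons u true) <= M u).

Lemma descend_le M u : supermartingale lo hi M -> M (descend M u) <= M u.
Proof.
move=> sm; rewrite /descend; case: (lerP (M (rcons u true)) (M u)) => // lt_u1.
have [lo_ge0 [lo_hi hi_le1]] := fs u.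
have := le_trans (upE_ge (fun x => M (rcons u x)) lo_ge0 (lexx _) lo_hi hi_le1) (sm u).
move=> /= hup; have lo_le1 : lo u <= 1 by apply: le_trans hi_le1.
case: (lerP (M (rcons u true)) (M (rcons u false))) => h; nra.
Qed.

(* Along the path on which [M] never increases, [liminf M <= M t]. *)
Lemma supermartingale_ge0 M : supermartingale lo hi M ->
  (forall w, (0 <= limn_einf (fun n => (M (mkseq w n))%:E))%E) -> forall t, 0 <= M t.
Proof.
move=> sm M_liminf t; rewrite leNgt; apply/negP => Mt_lt0.
pose w i := nth false (iter i.+1 (descend M) t) i.
have M_descend k : M (iter k (descend M) t) <= M t.
  by elim: k => [|k IH] //=; apply: le_trans (descend_le _ sm) IH.
have : (limn_einf (fun n => (M (mkseq w n))%:E) <= (M t)%:E)%E.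
  apply: (@limn_einf_le _ _ (size t)) => n tn.
  by rewrite -(subnKC tn) (mkseq_iter_rcons (fun u => M (rcons u true) <= M u)) lee_fin.
by move/(le_trans (M_liminf w)); rewrite lee_fin leNgt Mt_lt0.
Qed.

Lemma supermartingale_rcons_le M u (x : bool) (m : nat) :
  supermartingale lo hi M -> (forall t, 0 <= M t) ->
  2 ^- m <= hi u -> 2 ^- m <= 1 - lo u -> M (rcons u x) <= 2 ^+ m * M u.
Proof.
move=> sm M_ge0 m_hi m_lo; have [lo_ge0 [lo_hi hi_le1]] := fs u.
have key : 2 ^- m * M (rcons u x) <= M u.
  have := M_ge0 (rcons u true); have := M_ge0 (rcons u false).
  case: x; [have := upE_ge (fun x => M (rcons u x)) lo_ge0 lo_hi (lexx _) hi_le1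
           |have := upE_ge (fun x => M (rcons u x)) lo_ge0 (lexx _) lo_hi hi_le1];
    move: (sm u) => /=; nra.
have e_gt0 : 0 < (2 : R) ^+ m by rewrite exprn_gt0.
by rewrite -ler_pdivrMl // invf_div divr1.
Qed.

Lemma supermartingale_growth M (K m : seq bool -> nat) :
  supermartingale lo hi M -> (forall t, 0 <= M t) ->
  K [::] = 0%N -> (forall u x, K (rcons u x) = (K u + m u)%N) ->
  (forall u, 2 ^- m u <= hi u /\ 2 ^- m u <= 1 - lo u) ->
  forall s, M s <= 2 ^+ K s * M [::].
Proof.
move=> sm M_ge0 K0 KS m_ok; elim/last_ind => [|s x IH]; first by rewrite K0 mul1r.
have [m_hi m_lo] := m_ok s.
rewrite KS exprD -mulrA; apply: le_trans (supermartingale_rcons_le x sm M_ge0 m_hi m_lo) _.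
by rewrite mulrCA ler_wpM2l // exprn_ge0.
Qed.

Lemma upP_transfer (G G' : set (nat -> bool)) s (k r : R) : G' `<=` G -> 0 <= k ->
  (forall M, supermartingale lo hi M -> (forall t, 0 <= M t) -> M s <= k * M [::]) ->
  (upP lo hi G [::] < r%:E)%E -> (upP lo hi G' s <= (k * r)%:E)%E.
Proof.
move=> GG' k_ge0 Mk /ereal_inf_lt [_ [M [sm M_liminf] <-]]; rewrite lte_fin => Mr.
have indic_ge0 (H : set (nat -> bool)) w : (0 <= @indicE R H w)%E.
  by rewrite /indicE lee_fin; case: asboolP.
have M_ge0 : forall t, 0 <= M t.
  by apply: supermartingale_ge0 sm _ => w; apply: le_trans (M_liminf w _).
apply: le_trans (ereal_inf_lbound _) _.
  exists M => //; split => // w sw; apply: le_trans (M_liminf w _) => //.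
  rewrite /indicE lee_fin; case: (asboolP (G' w)) => [/GG' Gw|_]; last by case: asboolP.
  by case: asboolP.
rewrite lee_fin; apply: le_trans (Mk M sm M_ge0) _.
by rewrite ler_wpM2l // ltW.
Qed.
End Supermartingales.

Lemma cyl_prefix s t w : cyl s w -> cyl t w -> (size s <= size t)%N -> prefix s t.
Proof.
move=> ws wt st; rewrite prefixE -wt -ws /mkseq -map_take take_iota.
by rewrite size_map size_iota minnC (minn_idPr st).
Qed.

Lemma cylA_Age_subD A n l : partial_cut (Asec A n) ->
  cylA (Age A n l) `<=` cylA (Asec A n) `\` cylA (Alt A n l).
Proof.
move=> cut w [t [At lt] wt]; split; first by exists t.
move=> [u [Au ul] wu]; have := cut u t Au At (cyl_prefix wu wt (ltnW (leq_trans ul lt))).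
by move=> eut; move: (leq_trans ul lt); rewrite eut ltnn.
Qed.

Lemma cylA_Age_sub A n l : cylA (Age A n l) `<=` cylA (Asec A n).
Proof. by move=> w [t [At _] wt]; exists t. Qed.

(** * The growth exponent *)

Section GrowthExponent.
Variables (R : realType) (lo hi : seq bool -> R) (a b c a' b' c' : nat -> nat -> nat).
Hypotheses (fs : forecasting_system lo hi) (nd : non_degenerate lo hi).
Hypotheses (hi_apx : approximates hi a b c) (lo_apx : approximates lo a' b' c').
Hypotheses (rec_a : rec2 a) (rec_b : rec2 b) (rec_c : rec2 c).
Hypotheses (rec_a' : rec2 a') (rec_b' : rec2 b') (rec_c' : rec2 c').

(* [t == 0], which codes no string, makes the search total with result [0], so
   [prefix_sum] ignores it; [(fun t n => (c' t n).+1 + b' t n, a', c')]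
   approximates [1 - lo] (lemma [approximates_compl]). *)
Definition exponent_ok t y :=
  (t == 0)%N || dyadic_lb a b c t y && dyadic_lb (fun t n => (c' t n).+1 + b' t n)%N a' c' t y.

Definition step_exponent t := minsearch (fun v => exponent_ok (nth 0 v 1) (nth 0 v 0)) [:: t].

Definition growth_exponent s := prefix_sum step_exponent (code s).

Lemma exponent_ok_exists t : exists y, exponent_ok t y.
Proof.
have [->|/code_surj [s <-]] := posnP t; first by exists 0%N.
have [lo_ge0 [_ hi_le1]] := fs s; have [lo_lt1 hi_gt0] := nd s.
have [y y_le] : exists y, 3 * 2 ^- y <= hi s * (1 - lo s).
  by apply: exists_dyadic_le; rewrite mulr_gt0 // subr_gt0.
exists y; apply/orP; right; apply/andP; split.
  by apply: (dyadic_lb_complete hi_apx); nra.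
by apply: (dyadic_lb_complete (approximates_compl lo_apx)); nra.
Qed.

Lemma step_exponent0 : step_exponent 0%N = 0%N.
Proof. by apply/eqP; rewrite -leqn0; apply: (minsearch_min (y := 0%N)). Qed.

Lemma step_exponent_bound s :
  2 ^- step_exponent (code s) <= hi s /\ 2 ^- step_exponent (code s) <= 1 - lo s.
Proof.
have := @minsearchP (fun v => exponent_ok (nth 0 v 1) (nth 0 v 0)) [:: code s]
  (exponent_ok_exists (code s)); rewrite /exponent_ok /=.
rewrite eqn0Ngt code_gt0 /= => /andP[ok_hi ok_lo]; split.
  exact: dyadic_lb_sound hi_apx ok_hi.
exact: dyadic_lb_sound (approximates_compl lo_apx) ok_lo.
Qed.

Lemma growth_exponent_rcons u x :
  growth_exponent (rcons u x) = (growth_exponent u + step_exponent (code u))%N.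
Proof. by rewrite /growth_exponent code_rcons prefix_sum_double // step_exponent0. Qed.

Lemma supermartingale_le_growth M s : supermartingale lo hi M -> (forall t, 0 <= M t) ->
  M s <= 2 ^+ growth_exponent s * M [::].
Proof.
move=> sm M_ge0; apply: (supermartingale_growth fs sm M_ge0 _ growth_exponent_rcons).
  by rewrite /growth_exponent /prefix_sum big_ord1 /= step_exponent0.
exact: step_exponent_bound.
Qed.

Lemma computable_step_exponent : computable (fun v => step_exponent (nth 0 v 0)).
Proof.
apply: (computable_comp (Gs := [:: nth 0^~ 0])); last by split; first exact: computable_nth.
apply: computable_minsearch; last by move=> v; exact: exponent_ok_exists.
have rec_compl : rec2 (fun t n => (c' t n).+1 + b' t n)%N.
  move/rec2_computable: rec_c'; move/rec2_computable: rec_b' => hb hc.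
  by apply/rec2_computable/computable_addn => //; exact: computable_succ.
apply: computable_orb.
  apply: computable_ext (computable_leq (computable_nth 1) computable_zero) _ => v.
  by rewrite leqn0.
by apply: computable_andb; exact: computable_dyadic_lb.
Qed.
End GrowthExponent.

Lemma computable_rec1 f : computable (fun v => f (nth 0 v 0)) -> rec1 f.
Proof. by move=> [p hp]; exists p => n; exact: hp [:: n]. Qed.

Lemma exp2_inv_le (R : realType) m n : (m <= n)%N -> 2 ^- n <= 2 ^- m :> R.
Proof. by move=> mn; rewrite -!exprVn ler_wiXn2l // invf_le1 ?ler1n. Qed.

Lemma exp2_invS_lt (R : realType) m : 2 ^- m.+1 < 2 ^- m :> R.
Proof.
have e_gt0 : 0 < (2 : R) ^- m by rewrite invr_gt0 exprn_gt0.
by rewrite exprS invfM; lra.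
Qed.

Lemma exp2_shift (R : realType) N K : 2 ^+ K * 2 ^- (N + K) = 2 ^- N :> R.
Proof. by rewrite exprD invfM mulrCA divff ?mulr1 // expf_neq0. Qed.

Lemma Age_covered (R : realType) (lo hi : seq bool -> R) A (e : nat -> nat -> nat) j n l :
  partial_cut (Asec A n) ->
  (forall n, (upP lo hi (cylA (Asec A n)) [::] <= ((2 : R) ^- n)%:E)%E) ->
  (forall N n l, (e N n <= l)%N ->
    (upP lo hi (cylA (Asec A n) `\` cylA (Alt A n l)) [::] <= ((2 : R) ^- N)%:E)%E) ->
  (majorant e j <= l)%N ->
  exists G, cylA (Age A n l) `<=` G /\ (upP lo hi G [::] <= ((2 : R) ^- j)%:E)%E.
Proof.
move=> cut A_small e_tail le_l; have [n_le|n_gt] := leqP n j.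
  exists (cylA (Asec A n) `\` cylA (Alt A n l)); split; first exact: cylA_Age_subD.
  by apply: e_tail; apply: leq_trans le_l; exact: leq_majorant.
exists (cylA (Asec A n)); split; first exact: cylA_Age_sub.
by apply: le_trans (A_small n) _; rewrite lee_fin exp2_inv_le // ltnW.
Qed.

Theorem lemma8p3 (R : realType) (lo hi : seq bool -> R)
  (A : nat -> seq bool -> Prop) :
  forecasting_system lo hi -> non_degenerate lo hi -> computable_fs lo hi ->
  schnorr_test lo hi A ->
  (forall n, partial_cut (Asec A n)) ->
  exists et : nat -> seq bool -> nat,
    [/\ rec_NS et,
        (forall s, growth (fun N => et N s)) &
        forall N n s l, (et N s <= l)%N ->
          (upP lo hi (cylA (Age A n l)) s <= ((2 : R) ^- N)%:E)%E].
Proof.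
move=> fs nd [[a' [b' [c' [ra' rb' rc' lo_apx]]]] [a [b [c [ra rb rc hi_apx]]]]].
move=> [_ A_small [e [rec_e e_tail]]] cut.
pose K := growth_exponent a b c a' b' c'.
pose g N t := (N + majorant e (N + prefix_sum (step_exponent a b c a' b' c') t).+1)%N.
have comp_g : computable (fun v => g (nth 0 v 0) (nth 0 v 1)).
  apply: computable_addn (computable_nth 0) (computable_majorant rec_e _).
  apply/computable_succ/computable_addn; first exact: computable_nth.
  apply: computable_op1 (computable_prefix_sum _) (computable_nth 1).
  exact: computable_step_exponent.
exists (fun N s => g N (code s)); split.
- by exists g; split=> //; apply/rec2_computable.
- move=> s; split; [|split].
  + apply: computable_rec1.
    exact: computable_op2 comp_g (computable_nth 0) (computable_const (code s)).
  + by move=> m n mn; rewrite /g leq_add // majorant_homo // ltnS leq_add2r.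
  + by move=> m; exists m; apply: leq_addr.
move=> N n s l le_l.
have [G [sub_G small_G]] := Age_covered (cut n) A_small e_tail
  (leq_trans (leq_addl _ _) le_l : (majorant e (N + K s).+1 <= l)%N).
rewrite -(exp2_shift R N (K s)).
apply: (upP_transfer fs sub_G); first exact: exprn_ge0.
  by move=> M sm M_ge0; exact: supermartingale_le_growth.
by apply: le_lt_trans small_G _; rewrite lte_fin exp2_invS_lt.
Qed.
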